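(* Let $G_0$ be a non-abelian finite simple group such that the exact sequence $1\to\mathrm{Inn}(G_0)\to\mathrm{Aut}(G_0)\to\mathrm{Out}(G_0)\to1$ splits. Then for every integer $N\ge1$ and every finite group $G$, every extension of $G_0^N$ by $G$ is a semidirect product $G_0^N\rtimes G$ (i.e. every exact sequence $1\to G_0^N\to\Gamma\to G\to1$ splits).
   Context: A group $\Gamma$ is an extension of $N$ by $H$ if there is an exact sequence $1\to N\to\Gamma\to H\to1$. $\mathrm{Inn}$, $\mathrm{Aut}$, $\mathrm{Out}$ denote inner, all, and outer automorphism groups. *)

From mathcomp Require Import all_boot all_fingroup all_solvable.
Set Implicit Arguments. Unset Strict Implicit. Unset Printing Implicit Defensive.
Local Open Scope group_scope.

Definition Inn (gT : finGroupType) (G : {group gT}) : {set {perm gT}} :=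
  conj_aut G @* G.

Definition is_direct_power (gT rT : finGroupType) (M : {set gT}) (G0 : {set rT})
  (N : nat) : Prop :=
  exists Mi : 'I_N -> {group gT},
    \big[dprod/1]_(i < N) Mi i = M /\ forall i, Mi i \isog G0.

From mathcomp Require Import all_boot all_fingroup all_solvable.
Set Implicit Arguments. Unset Strict Implicit. Unset Printing Implicit Defensive.
Local Open Scope group_scope.

(* Write M = M_1 x ... x M_N with M_i ~ G0 via f_i, and fix a complement K of
   Inn G0 in Aut G0. Since the factors are non-abelian simple, conjugation by
   x in Gamma permutes them, M_i^x = M_(s i), and f_(s i)^-1 o (conj x) o f_i
   is an automorphism of G0. The elements of Gamma for which all these
   automorphisms lie in K form a complement to M: it meets M trivially because
   an element of M induces inner automorphisms and Z(G0) = 1, and every x is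
   corrected into it by an element of M, whose i-th component cancels the
   inner part of the i-th automorphism induced by x. *)

Lemma Aut_of_morph_in (T : finGroupType) (G : {group T}) (h : T -> T) :
    {in G &, injective h} -> {in G, forall g, h g \in G} ->
    {in G &, {morph h : x y / x * y}} ->
  exists2 a, a \in Aut G & {in G, h =1 a}.
Proof.
move=> h_inj hG hM.
have sub_hG : h @: G \subset G by apply/subsetP=> _ /imsetP[g Gg ->]; exact: hG.
exists (perm_in h_inj sub_hG); last by move=> g Gg; rewrite perm_inE.
rewrite inE perm_in_on /=; apply/morphicP=> x y Gx Gy.
by rewrite !perm_inE ?groupM // hM.
Qed.

Lemma simple_nonabelian_center1 (T : finGroupType) (G : {group T}) :
  simple G -> ~~ abelian G -> 'Z(G) = 1.
Proof.
move=> simG nabG; have [_ /(_ _ (center_normal G)) [//|ZG]] := simpleP _ simG.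
by case/negP: nabG; rewrite /abelian -{1}ZG subsetIr.
Qed.

Lemma Aut_mulInn_decomp (T : finGroupType) (G : {group T}) (K : {set {perm T}}) a :
    Inn G * K = Aut G -> a \in Aut G ->
  exists2 g, g \in G & exists2 s, s \in K & {in G, forall h, a h = s (h ^ g)}.
Proof.
move=> InnK; rewrite -InnK => /mulsgP[c s /morphimP[g _ Gg ->] Ks ->].
by exists g => //; exists s => // h Gh; rewrite permM conj_autE.
Qed.

Lemma conj_aut_TI_center1 (T : finGroupType) (G : {group T}) (K : {set {perm T}}) v :
  Inn G :&: K = 1 -> 'Z(G) = 1 -> v \in G -> conj_aut G v \in K -> v = 1.
Proof.
move=> tiK Z1 Gv Kv; have nGv : v \in 'N(G) := subsetP (normG G) v Gv.
have : conj_aut G v \in Inn G :&: K by rewrite inE mem_morphim.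
rewrite tiK => /set1P v1.
suff : v \in 'Z(G) by rewrite Z1 => /set1P.
by rewrite inE Gv -ker_conj_aut; exact/kerP.
Qed.

Section DirectProductSplitting.

Variables (gT : finGroupType) (I : finType) (Mi : I -> {group gT}) (M : {group gT}).
Hypothesis defM : \big[dprod/1]_i Mi i = M.

Lemma bigdprod_factor_normal i : Mi i <| M.
Proof. by have := defM; rewrite (bigD1 i) //= => /dprod_normal2[]. Qed.

Lemma bigdprod_factor_sub i : Mi i \subset M.
Proof. exact: normal_sub (bigdprod_factor_normal i). Qed.

Lemma bigdprod_factor_cent i j : i != j -> Mi j \subset 'C(Mi i).
Proof.
move=> nij; have := defM; rewrite (bigD1 i) //= => defMi.
have [[A R defA defR] _ cRi _] := dprodP defMi.
apply: subset_trans cRi; rewrite ?defA defR -(bigdprodWY defR).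
by apply: sub_gen; apply: (bigcup_max j); rewrite // eq_sym.
Qed.

Lemma conjg_bigprod_factor (c : I -> gT) i z :
  (forall j, c j \in Mi j) -> z \in Mi i -> z ^ (\prod_j c j) = z ^ c i.
Proof.
move=> Mc; suff prod_only_i r y : y \in Mi i ->
    y ^ (\prod_(j <- r) c j) = y ^ (\prod_(j <- r | j == i) c j).
  by move=> Mz; rewrite prod_only_i // big_pred1_eq.
elim: r y => [|j r IHr] y My; first by rewrite !big_nil.
rewrite !big_cons conjgM; have [-> | nji] := eqVneq j i.
  by rewrite conjgM IHr // groupJ ?Mc.
have cjy : c j \in 'C(Mi i).
  by apply: (subsetP (bigdprod_factor_cent _)) (Mc j); rewrite eq_sym.
by rewrite /(y ^ c j) -(centP cjy y My) mulKg IHr.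
Qed.

Section SimpleFactors.

Hypotheses (simMi : forall i, simple (Mi i)) (nabMi : forall i, ~~ abelian (Mi i)).

Lemma bigdprod_factor_inj i j : Mi i :=: Mi j -> i = j.
Proof.
move=> eqMij; have [// | nij] := eqVneq i j.
by case/negP: (nabMi j); rewrite /abelian -{2}eqMij bigdprod_factor_cent.
Qed.

Lemma simple_normal_bigdprod_factor (A : {group gT}) :
  A <| M -> simple A -> ~~ abelian A -> exists j, A :=: Mi j.
Proof.
move=> nsAM simA nabA.
have [j ntAj | triv] := pickP (fun j => A :&: Mi j != 1).
  have nsAjA : A :&: Mi j <| A.
    have nsAjM := normalI nsAM (bigdprod_factor_normal j).
    by rewrite (normalS _ _ nsAjM) ?subsetIl ?normal_sub.
  have [_ /(_ _ nsAjA) [Aj1 | AjA]] := simpleP _ simA.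
    by rewrite Aj1 eqxx in ntAj.
  have sAMj : A \subset Mi j by rewrite -AjA subsetIr.
  have [ntA _] := simpleP _ simA.
  have nsAMj : A <| Mi j by rewrite (normalS _ (bigdprod_factor_sub j)).
  have [_ /(_ _ nsAMj) [A1 | AMj]] := simpleP _ (simMi j).
    by rewrite A1 eqxx in ntA.
  by exists j.
have cMA : M \subset 'C(A).
  rewrite -(bigdprodWY defM) gen_subG; apply/bigcupsP => j _.
  apply/commG1P/trivgP; have /negbFE/eqP <- := triv j; rewrite setIC.
  apply: commg_subI; rewrite subsetI subxx //=.
    exact: subset_trans (bigdprod_factor_sub j) (normal_norm nsAM).
  exact: subset_trans (normal_sub nsAM) (normal_norm (bigdprod_factor_normal j)).
by case/negP: nabA; apply: subset_trans cMA; exact: normal_sub.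
Qed.

Section Conjugation.

Variable Gamma : {group gT}.
Hypothesis nsMGamma : M <| Gamma.

Lemma M_sub_Gamma : M \subset Gamma.
Proof. exact: normal_sub nsMGamma. Qed.

Lemma conjg_bigdprod_factor x i : x \in Gamma -> exists j, Mi i :^ x = Mi j.
Proof.
move=> Gx; have nMx : x \in 'N(M) := subsetP (normal_norm nsMGamma) x Gx.
apply: (simple_normal_bigdprod_factor (A := (Mi i :^ x)%G)).
- by rewrite -(normP nMx) normalJ bigdprod_factor_normal.
- by rewrite -(isog_simple (conj_isog (Mi i) x)).
- by rewrite -(isog_abelian (conj_isog (Mi i) x)).
Qed.

Definition conj_index x i := odflt i [pick j | Mi i :^ x == Mi j].

Lemma conj_indexP x i : x \in Gamma -> Mi i :^ x = Mi (conj_index x i).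
Proof.
move=> Gx; rewrite /conj_index; case: pickP => [j /eqP //| none].
by have [j Mij] := conjg_bigdprod_factor i Gx; have := none j; rewrite Mij eqxx.
Qed.

Lemma conj_index_uniq x i j : x \in Gamma -> Mi i :^ x = Mi j -> conj_index x i = j.
Proof. by move=> Gx Mij; apply: bigdprod_factor_inj; rewrite -(conj_indexP i Gx). Qed.

Lemma conj_indexM x y i : x \in Gamma -> y \in Gamma ->
  conj_index (x * y) i = conj_index y (conj_index x i).
Proof.
by move=> Gx Gy; apply: conj_index_uniq; rewrite ?groupM // conjsgM !conj_indexP.
Qed.

Lemma conj_index_bigdprod m i : m \in M -> conj_index m i = i.
Proof.
move=> Mm; apply: conj_index_uniq; first exact: (subsetP M_sub_Gamma).
exact/normP/(subsetP (normal_norm (bigdprod_factor_normal i))).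
Qed.

Section InducedAutomorphisms.

Variables (g0T : finGroupType) (G0 : {group g0T}) (f : I -> {morphism G0 >-> gT}).
Hypotheses (injf : forall i, 'injm (f i)) (fG0 : forall i, f i @* G0 = Mi i).

Definition induced_aut x i g := invm (injf (conj_index x i)) (f i g ^ x).

Lemma conjg_factor_in x i g : x \in Gamma -> g \in G0 ->
  f i g ^ x \in f (conj_index x i) @* G0.
Proof.
by move=> Gx G0g; rewrite fG0 -(conj_indexP i Gx) memJ_conjg -fG0 mem_morphim.
Qed.

Lemma invm_factor_in i y : y \in f i @* G0 -> invm (injf i) y \in G0.
Proof. by case/morphimP => a _ G0a ->; rewrite invmE. Qed.

Lemma induced_autK x i g : x \in Gamma -> g \in G0 ->
  f (conj_index x i) (induced_aut x i g) = f i g ^ x.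
Proof. by move=> Gx G0g; rewrite /induced_aut invmK ?conjg_factor_in. Qed.

Lemma induced_aut_in x i g : x \in Gamma -> g \in G0 -> induced_aut x i g \in G0.
Proof. by move=> Gx G0g; rewrite invm_factor_in ?conjg_factor_in. Qed.

Lemma induced_aut_Aut x i : x \in Gamma ->
  exists2 a, a \in Aut G0 & {in G0, induced_aut x i =1 a}.
Proof.
move=> Gx; apply: Aut_of_morph_in; last 1 first.
- move=> g h G0g G0h; rewrite /induced_aut morphM // conjMg.
  by rewrite (morphM (invm_morphism _)) ?conjg_factor_in.
- move=> g h G0g G0h /(congr1 (f (conj_index x i))).
  by rewrite !induced_autK // => /conjg_inj /(injmP (injf i)) ->.
- by move=> g G0g; apply: induced_aut_in.
Qed.

Lemma induced_autM x y i g : x \in Gamma -> y \in Gamma -> g \in G0 ->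
  induced_aut (x * y) i g = induced_aut y (conj_index x i) (induced_aut x i g).
Proof.
move=> Gx Gy G0g; rewrite {2}/induced_aut induced_autK //.
by rewrite /induced_aut conj_indexM // conjgM.
Qed.

Lemma induced_aut1 i g : g \in G0 -> induced_aut 1 i g = g.
Proof. by move=> G0g; rewrite /induced_aut conj_index_bigdprod // conjg1 invmE. Qed.

Lemma induced_aut_bigprod (c : I -> gT) i g : (forall j, c j \in Mi j) -> g \in G0 ->
  induced_aut (\prod_j c j) i g = g ^ invm (injf i) (c i).
Proof.
move=> Mc G0g; have Mm : \prod_j c j \in M.
  by apply: group_prod => j _; apply: (subsetP (bigdprod_factor_sub j)).
have fc : c i \in f i @* G0 by rewrite fG0.
have fg : f i g \in f i @* G0 by rewrite mem_morphim.
rewrite /induced_aut conj_index_bigdprod // (conjg_bigprod_factor (i := i)) -?fG0 //.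
by rewrite morphJ // [invm_morphism _ (f i g)]invmE.
Qed.

Section Complement.

Variable K : {group {perm g0T}}.
Hypotheses (tiK : Inn G0 :&: K = 1) (InnK : Inn G0 * K = Aut G0) (Z1 : 'Z(G0) = 1).

Lemma complement_sub_Aut : K \subset Aut G0.
Proof. by rewrite -InnK mulG_subr. Qed.

Definition aut_complement :=
  [set x in Gamma | [forall i, [exists s in K, [forall g in G0, induced_aut x i g == s g]]]].

Lemma aut_complementP x :
  reflect (x \in Gamma /\ forall i, exists2 s, s \in K & {in G0, induced_aut x i =1 s})
          (x \in aut_complement).
Proof.
rewrite inE; apply: (iffP andP) => -[Gx Kx]; split=> //.
- move=> i; have /existsP[s /andP[Ks /forallP eq_s]] := forallP Kx i.
  by exists s => // g G0g; apply/eqP; exact: implyP (eq_s g) G0g.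
- apply/forallP=> i; have [s Ks eq_s] := Kx i; apply/existsP; exists s.
  by rewrite Ks; apply/forall_inP=> g G0g; rewrite eq_s.
Qed.

Lemma group_set_aut_complement : group_set aut_complement.
Proof.
apply/group_setP; split.
  apply/aut_complementP; split=> [|i]; first exact: group1.
  by exists 1 => [|g G0g]; rewrite ?group1 ?perm1 ?induced_aut1.
move=> x y /aut_complementP[Gx Kx] /aut_complementP[Gy Ky].
apply/aut_complementP; split=> [|i]; first exact: groupM.
have [s Ks eq_s] := Kx i; have [t Kt eq_t] := Ky (conj_index x i).
exists (s * t) => [|g G0g]; first exact: groupM.
rewrite induced_autM // eq_s // eq_t ?permM //.
by rewrite Aut_closed ?(subsetP complement_sub_Aut).
Qed.

Canonical aut_complement_group := Group group_set_aut_complement.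

Lemma aut_complement_TI : M :&: aut_complement = 1.
Proof.
apply/trivgP/subsetP=> m /setIP[Mm /aut_complementP[_ Km]]; apply/set1P.
have [c [Mc defm _]] := mem_bigdprod defM Mm; rewrite defm big1 // => i _.
have {}Mc j : c j \in Mi j := Mc j isT.
have [s Ks eq_s] := Km i; rewrite defm in eq_s.
have fc : c i \in f i @* G0 by rewrite fG0.
have G0v : invm (injf i) (c i) \in G0 by exact: invm_factor_in.
have Kv : conj_aut G0 (invm (injf i) (c i)) \in K.
  suff -> : conj_aut G0 (invm (injf i) (c i)) = s by [].
  apply: (@eq_Aut _ G0); [exact: Aut_aut | exact: subsetP complement_sub_Aut _ Ks |].
  by move=> g G0g; rewrite conj_autE // -eq_s // induced_aut_bigprod.
by rewrite -(invmK (injf i) fc) (conj_aut_TI_center1 tiK Z1 G0v Kv) morph1.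
Qed.

Lemma aut_complement_mul : M * aut_complement = Gamma.
Proof.
apply/eqP; rewrite eqEsubset mul_subG ?M_sub_Gamma //=; last first.
  by apply/subsetP=> x /aut_complementP[].
apply/subsetP=> x Gx.
have /fin_all_exists[g eq_g] i : exists g, g \in G0 /\
    exists2 s, s \in K & {in G0, forall h, induced_aut x i h = s (h ^ g)}.
  have [a Auta eq_a] := induced_aut_Aut i Gx.
  have [g G0g [s Ks eq_s]] := Aut_mulInn_decomp InnK Auta.
  by exists g; split=> //; exists s => // h G0h; rewrite eq_a ?eq_s.
pose c j := f j (g j)^-1.
have Mc j : c j \in Mi j by rewrite -fG0 mem_morphim ?groupV; case: (eq_g j).
have Mm : \prod_j c j \in M.
  by apply: group_prod => j _; apply: (subsetP (bigdprod_factor_sub j)).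
have Gm : \prod_j c j \in Gamma := subsetP M_sub_Gamma _ Mm.
rewrite -(mulKg (\prod_j c j) x) mem_mulg ?groupV //.
apply/aut_complementP; split=> [|i]; first exact: groupM.
have [G0g [s Ks eq_s]] := eq_g i; exists s => // h G0h.
rewrite induced_autM // induced_aut_bigprod // conj_index_bigdprod //.
by rewrite eq_s ?groupJ ?groupV // /c invmE ?groupV // conjgKV.
Qed.

Lemma bigdprod_splits : [splits Gamma, over M].
Proof.
apply/splitsP; exists aut_complement_group; apply/complP.
by split; [exact: aut_complement_TI | exact: aut_complement_mul].
Qed.

End Complement.
End InducedAutomorphisms.
End Conjugation.
End SimpleFactors.
End DirectProductSplitting.

Theorem proposition2p8 (g0T : finGroupType) (G0 : {group g0T}) :
  simple G0 -> ~~ abelian G0 ->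
  [splits Aut G0, over Inn G0] ->
  forall (N : nat), (1 <= N)%N ->
  forall (hT : finGroupType) (G : {group hT})
         (gT : finGroupType) (Gamma M : {group gT}),
    M <| Gamma -> is_direct_power M G0 N -> Gamma / M \isog G ->
    [splits Gamma, over M].
Proof.
move=> simG0 nabG0 /splitsP[K /complP[tiK InnK]] N _ hT G gT Gamma M nsMGamma.
case=> Mi [defM isoMi] _.
have /fin_all_exists[f /all_and2[injf fG0]] i :
    exists f : {morphism G0 >-> gT}, 'injm f /\ f @* G0 = Mi i.
  have /isogP[f injf fG0] : G0 \isog Mi i by rewrite isog_sym.
  by exists f.
have simMi i : simple (Mi i) by rewrite (isog_simple (isoMi i)).
have nabMi i : ~~ abelian (Mi i) by rewrite (isog_abelian (isoMi i)).
exact: (bigdprod_splits defM simMi nabMi nsMGamma injf fG0 tiK InnK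
  (simple_nonabelian_center1 simG0 nabG0)).
Qed.
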